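(* Let $\mathcal{O}$ be an order in a number field $K$, let $\mathfrak{d}\subseteq\mathfrak{m}\subseteq\mathcal{O}$ be nonzero integral ideals, and let $\Sigma$ be any (possibly empty) set of real places of $K$. Then the inclusion $J^*_{\mathfrak{d}}(\mathcal{O})\subseteq J^*_{\mathfrak{m}}(\mathcal{O})$ induces an isomorphism $$\mathrm{Cl}_{\mathfrak{m},\Sigma}(\mathcal{O})=\frac{J^*_{\mathfrak{d}}(\mathcal{O})}{P^{\mathfrak{d}}_{\mathfrak{m},\Sigma}(\mathcal{O})}.$$
   Context: An order is a subring of $K$ containing $1$, free of rank $[K:\mathbb Q]$ over $\mathbb Z$. A fractional $\mathcal O$-ideal is an $\mathcal O$-submodule $\mathfrak a\subseteq K$ with $\lambda\mathfrak a\subseteq\mathcal O$ for some $\lambda\in K^\times$, invertible if $\mathfrak a\mathfrak b=\mathcal O$ for some fractional $\mathfrak b$; it is coprime to an integral ideal $\mathfrak c$ if $\mathfrak a=(\mathfrak a_1:\mathfrak b_1)=\{x\in K:x\mathfrak b_1\subseteq\mathfrak a_1\}$ with $\mathfrak a_1$ integral, $\mathfrak b_1$ invertible integral, both coprime to $\mathfrak c$ (sum equal to $\mathcal O$). $J^*_{\mathfrak c}(\mathcal O)$ is the group of invertible fractional ideals coprime to $\mathfrak c$. For $\alpha\in K$, $\alpha\equiv1\pmod{\mathfrak m}$ means $\alpha-1\in\mathfrak m\mathcal O[S_{\mathfrak m}^{-1}]$, $S_{\mathfrak m}=\{a\in\mathcal O:a\mathcal O+\mathfrak m=\mathcal O\}$.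 $P_{\mathfrak m,\Sigma}(\mathcal O)=\{\alpha\mathcal O:\alpha\in K^\times,\alpha\equiv1\pmod{\mathfrak m},\rho(\alpha)>0\ \forall\rho\in\Sigma\}$, $\mathrm{Cl}_{\mathfrak m,\Sigma}(\mathcal O)=J^*_{\mathfrak m}(\mathcal O)/P_{\mathfrak m,\Sigma}(\mathcal O)$, and $P^{\mathfrak d}_{\mathfrak m,\Sigma}(\mathcal O)$ is the subgroup of those $\alpha\mathcal O\in P_{\mathfrak m,\Sigma}(\mathcal O)$ with $\alpha\mathcal O$ coprime to $\mathfrak d$. *)

(* number field K = finite-dimensional field extension of rat. *)
From HB Require Import structures.
From mathcomp Require Import all_boot all_order all_algebra all_field.
From mathcomp Require Import reals.
Set Implicit Arguments. Unset Strict Implicit. Unset Printing Implicit Defensive.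
Import Order.TTheory GRing.Theory Num.Theory.
Local Open Scope ring_scope.

Section Defs.
Variable K : fieldExtType rat.

Definition sub_eq (a b : K -> Prop) := forall x, a x <-> b x.
Definition sub_incl (a b : K -> Prop) := forall x, a x -> b x.

(* An order: a subring of K containing 1, free of rank [K:Q] over Z. *)
Definition is_order (O : K -> Prop) : Prop :=
  [/\ O 1,
      (forall x y, O x -> O y -> O (x - y)),
      (forall x y, O x -> O y -> O (x * y)) &
      exists b : 'I_(\dim {:K}) -> K,
        (forall x, O x <-> exists z : 'I_(\dim {:K}) -> int, x = \sum_i b i *~ z i) /\
        (forall z : 'I_(\dim {:K}) -> int, \sum_i b i *~ z i = 0 -> forall i, z i = 0)].

Definition is_submodule (O a : K -> Prop) : Prop :=
  [/\ a 0, (forall x y, a x -> a y -> a (x + y)) &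
      (forall r x, O r -> a x -> a (r * x))].

Definition is_frac_ideal (O a : K -> Prop) : Prop :=
  is_submodule O a /\ exists l : K, l != 0 /\ forall x, a x -> O (l * x).

Definition is_int_ideal (O a : K -> Prop) : Prop :=
  is_submodule O a /\ sub_incl a O.

Definition ideal_mul (a b : K -> Prop) : K -> Prop :=
  fun z => exists n (x y : 'I_n -> K),
    (forall i, a (x i) /\ b (y i)) /\ z = \sum_(i < n) x i * y i.

Definition ideal_add (a b : K -> Prop) : K -> Prop :=
  fun z => exists x y, a x /\ b y /\ z = x + y.

Definition ideal_colon (a b : K -> Prop) : K -> Prop :=
  fun x => forall y, b y -> a (x * y).

Definition principal (O : K -> Prop) (alpha : K) : K -> Prop :=
  fun z => exists x, O x /\ z = alpha * x.

Definition invertible (O a : K -> Prop) : Prop :=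
  is_frac_ideal O a /\ exists b, is_frac_ideal O b /\ sub_eq (ideal_mul a b) O.

Definition coprime_int (O a c : K -> Prop) : Prop := sub_eq (ideal_add a c) O.

Definition coprime_frac (O a c : K -> Prop) : Prop :=
  exists a1 b1, [/\ is_int_ideal O a1, is_int_ideal O b1 /\ invertible O b1,
                    coprime_int O a1 c, coprime_int O b1 c &
                    sub_eq a (ideal_colon a1 b1)].

Definition Jstar (O c a : K -> Prop) : Prop :=
  is_frac_ideal O a /\ invertible O a /\ coprime_frac O a c.

Definition S_of (O m : K -> Prop) : K -> Prop :=
  fun a => O a /\ coprime_int O (principal O a) m.

Definition localization (O m : K -> Prop) : K -> Prop :=
  fun z => exists x s, O x /\ S_of O m s /\ z = x / s.

Definition congr1 (O m : K -> Prop) (alpha : K) : Prop :=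
  ideal_mul m (localization O m) (alpha - 1).

(* P_{m,Σ}(O); real places given as real embeddings K -> R *)
Definition Pray (O m : K -> Prop) (R : realType) (Sigma : {rmorphism K -> R} -> Prop)
  (a : K -> Prop) : Prop :=
  exists alpha : K, [/\ alpha != 0, congr1 O m alpha,
                        (forall rho, Sigma rho -> 0 < rho alpha) &
                        sub_eq a (principal O alpha)].

Definition Pray_d (O m d : K -> Prop) (R : realType) (Sigma : {rmorphism K -> R} -> Prop)
  (a : K -> Prop) : Prop :=
  Pray O m Sigma a /\ coprime_frac O a d.

End Defs.

From Pilot Require Import Defs.
From mathcomp Require Import all_boot all_order all_algebra all_field.
From mathcomp Require Import reals.
From mathcomp Require Import ring lra zify.
From mathcomp Require polyrcf.
From Stdlib Require Import IndefiniteDescription.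
Import Order.TTheory GRing.Theory Num.Theory.
Local Open Scope ring_scope.
Set Implicit Arguments. Unset Strict Implicit. Unset Printing Implicit Defensive.

(* Write [a] in [J*_m] as [(a1 : b1)] and pick [t1] in [a1], [s1] in [b1], both
   congruent to 1 modulo [m]. Since [O/d] is finite, every element of [O] has a
   power that is idempotent modulo [d]. Applied to [x_0 y_0 = t1 s1] and to the
   terms of [1 = sum_(j > 0) x_j y_j] ([x_j] in [a], [y_j] in [a^-1]) this yields
   orthogonal idempotents [e_j] modulo [d] summing to 1, with [e_0 = 1] modulo
   [m], such that [t = sum e_j x_j] and [s = sum e_j y_j w_j] satisfy [t s = 1]
   modulo [d] and [t = t1] modulo [m a]. Adding to [t] a large multiple of a
   positive integer of [d a] makes it totally positive; the resulting [alpha]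
   is 1 modulo [m], and [alpha^-1 a] has the integral inverse [alpha a^-1],
   which is coprime to [d]. *)

(** * Fractional ideals *)

Section FractionalIdeals.
Variables (K : fieldExtType rat) (O : K -> Prop).
Hypothesis orderO : is_order O.

Lemma order1 : O 1. Proof. by case: orderO. Qed.
Lemma orderB x y : O x -> O y -> O (x - y). Proof. by case: orderO => _ + _ _; apply. Qed.
Lemma orderM x y : O x -> O y -> O (x * y). Proof. by case: orderO => _ _ + _; apply. Qed.
Lemma order0 : O 0. Proof. by rewrite -(subrr 1); apply: orderB; apply: order1. Qed.
Lemma orderN x : O x -> O (- x).
Proof. by move=> Ox; rewrite -sub0r; apply: orderB => //; apply: order0. Qed.
Lemma orderD x y : O x -> O y -> O (x + y).
Proof. by move=> Ox Oy; rewrite -(opprK y); apply: orderB => //; apply: orderN. Qed.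

Lemma order_nat n : O n%:R.
Proof.
by elim: n => [|n IHn]; [exact: order0 | rewrite mulrS; apply: orderD => //; apply: order1].
Qed.

Lemma order_int (z : int) : O z%:~R.
Proof.
case: z => n; first by rewrite -pmulrn; apply: order_nat.
by rewrite NegzE mulrNz; apply: orderN; rewrite -pmulrn; apply: order_nat.
Qed.

Lemma order_sum I r (P : pred I) (F : I -> K) :
  (forall i, P i -> O (F i)) -> O (\sum_(i <- r | P i) F i).
Proof. by move=> OF; elim/big_rec: _ => [|i x Pi]; [exact: order0 | apply: orderD; apply: OF]. Qed.

Lemma order_prod I r (P : pred I) (F : I -> K) :
  (forall i, P i -> O (F i)) -> O (\prod_(i <- r | P i) F i).
Proof. by move=> OF; elim/big_rec: _ => [|i x Pi]; [exact: order1 | apply: orderM; apply: OF]. Qed.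

Lemma orderX x k : O x -> O (x ^+ k).
Proof. by move=> Ox; rewrite -(subn0 k) -prodr_const_nat; apply: order_prod. Qed.

Lemma order_submod : is_submodule O O.
Proof. by split; [exact: order0 | exact: orderD | exact: orderM]. Qed.

Lemma order_int_ideal : is_int_ideal O O.
Proof. by split; [exact: order_submod | move=> x]. Qed.

Lemma order_frac_ideal : is_frac_ideal O O.
Proof.
by split; [exact: order_submod | exists 1; rewrite oner_eq0; split => // x; rewrite mul1r].
Qed.

Section Submodule.
Variable a : K -> Prop.
Hypothesis suba : is_submodule O a.

Lemma submod0 : a 0. Proof. by case: suba. Qed.
Lemma submodD x y : a x -> a y -> a (x + y). Proof. by case: suba => _ + _; apply. Qed.
Lemma submodMl r x : O r -> a x -> a (r * x). Proof. by case: suba => _ _; apply. Qed.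
Lemma submodMr r x : O r -> a x -> a (x * r). Proof. by rewrite mulrC; apply: submodMl. Qed.
Lemma submodN x : a x -> a (- x).
Proof. by move=> ax; rewrite -mulN1r; apply: submodMl => //; apply: orderN; apply: order1. Qed.
Lemma submodB x y : a x -> a y -> a (x - y).
Proof. by move=> ax ay; apply: submodD => //; apply: submodN. Qed.

Lemma submod_sum I r (P : pred I) (F : I -> K) :
  (forall i, P i -> a (F i)) -> a (\sum_(i <- r | P i) F i).
Proof.
by move=> aF; elim/big_rec: _ => [|i x Pi]; [exact: submod0 | apply: submodD; apply: aF].
Qed.

End Submodule.

Lemma ideal_mul_in (a b : K -> Prop) x y : a x -> b y -> ideal_mul a b (x * y).
Proof. by move=> ax bx; exists 1%N, (fun=> x), (fun=> y); rewrite big_ord1. Qed.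

Lemma ideal_mulC (a b : K -> Prop) z : ideal_mul a b z -> ideal_mul b a z.
Proof.
case=> n [x [y [xy ->]]]; exists n, y, x; split => [i|]; first by case: (xy i).
by apply: eq_bigr => i _; rewrite mulrC.
Qed.

Lemma ideal_mul_eqC (a b c : K -> Prop) :
  sub_eq (ideal_mul a b) c -> sub_eq (ideal_mul b a) c.
Proof. by move=> abc z; split => [/ideal_mulC /(abc z).1 | /(abc z).2 /ideal_mulC]. Qed.

Lemma ideal_mul_incl (a b c : K -> Prop) : is_submodule O c ->
  (forall x y, a x -> b y -> c (x * y)) -> sub_incl (ideal_mul a b) c.
Proof.
move=> subc abc _ [n [x [y [xy ->]]]]; apply: submod_sum => // i _.
by case: (xy i); apply: abc.
Qed.

Lemma ideal_mul_order : sub_eq (ideal_mul O O) O.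
Proof.
move=> z; split; last by move=> Oz; rewrite -[z]mul1r; apply: ideal_mul_in => //; exact: order1.
by apply: (ideal_mul_incl order_submod) => x y; apply: orderM.
Qed.

Lemma ideal_mul_seq (a b : K -> Prop) z : is_submodule O a -> is_submodule O b ->
  ideal_mul a b z -> exists n (x y : nat -> K),
    (forall i, a (x i) /\ b (y i)) /\ z = \sum_(i < n) x i * y i.
Proof.
move=> suba subb [n [x [y [xy ->]]]].
exists n, (fun i => oapp x 0 (insub i)), (fun i => oapp y 0 (insub i)); split.
  by move=> i; case: insubP => [j _ _ | _] /=; [exact: xy | split; exact: submod0].
by apply: eq_bigr => i _; rewrite valK.
Qed.

Lemma inverse_colon (a a' : K -> Prop) : is_submodule O a' ->
  sub_eq (ideal_mul a a') O -> sub_incl (ideal_colon O a) a'.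
Proof.
move=> suba' aa' z az; have [n [x [y [xy E]]]] := (aa' 1).2 order1.
rewrite -[z]mulr1 E mulr_sumr; apply: submod_sum => // i _; rewrite mulrA.
by case: (xy i) => ax a'y; apply: submodMl => //; apply: az.
Qed.

Lemma invertible_nonzero a : invertible O a -> exists2 x, a x & x != 0.
Proof.
case=> _ [a' [_ aa']]; have [n [x [y [xy E]]]] := (aa' 1).2 order1.
have [i xi_neq0 | x0] := pickP (fun i => x i != 0).
  by exists (x i); first by case: (xy i).
by move/eqP: (oner_neq0 K); rewrite E big1 // => i _; move/negbFE/eqP: (x0 i) => ->; rewrite mul0r.
Qed.

Lemma frac_ideal_eq a b : sub_eq a b -> is_frac_ideal O b -> is_frac_ideal O a.
Proof.
move=> ab [[b0 bD bM] [l [l_neq0 bl]]]; split; last by exists l; split => // x /(ab x).1 /bl.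
split; first exact/(ab 0).2.
- by move=> x y /(ab x).1 bx /(ab y).1 by_; apply/(ab _).2; apply: bD.
- by move=> r x Or /(ab x).1 bx; apply/(ab _).2; apply: bM.
Qed.

Lemma invertible_eq a b : sub_eq a b -> invertible O b -> invertible O a.
Proof.
move=> ab [Fb [b' [Fb' bb']]]; split; first exact: frac_ideal_eq Fb.
exists b'; split => // z; split.
  case=> n [x [y [xy ->]]]; apply/(bb' _).1; exists n, x, y; split => // i.
  by case: (xy i) => /(ab _).1.
case/(bb' z).2 => n [x [y [xy ->]]]; exists n, x, y; split => // i.
by case: (xy i) => /(ab _).2.
Qed.

End FractionalIdeals.

(** * Coprimality and principal ideals *)

Section Coprimality.
Variables (K : fieldExtType rat) (O : K -> Prop).
Hypothesis orderO : is_order O.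

Lemma coprime_intP b c : is_int_ideal O b -> is_int_ideal O c ->
  coprime_int O b c <-> exists2 x, b x & c (1 - x).
Proof.
move=> [subb bO] [subc cO]; split.
  move=> bc; have [x [y [bx [cy E]]]] := (bc 1).2 (order1 orderO).
  by exists x; rewrite // E addrC addKr.
move=> [x bx cx] z; split.
  by case=> u [v [bu [cv ->]]]; apply: (orderD orderO); [apply: bO | apply: cO].
move=> Oz; exists (z * x), (z * (1 - x)); split; first exact: (submodMl subb Oz bx).
by split; [exact: (submodMl subc Oz cx) | rewrite -mulrDr addrC subrK mulr1].
Qed.

Lemma coprime_int_mono b c c' : is_int_ideal O b -> is_int_ideal O c -> is_int_ideal O c' ->
  sub_incl c c' -> coprime_int O b c -> coprime_int O b c'.
Proof.
move=> Ib Ic Ic' cc' /(coprime_intP Ib Ic) [x bx cx].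
by apply/(coprime_intP Ib Ic'); exists x => //; apply: cc'.
Qed.

Lemma coprime_frac_mono a c c' : is_int_ideal O c -> is_int_ideal O c' ->
  sub_incl c c' -> coprime_frac O a c -> coprime_frac O a c'.
Proof.
move=> Ic Ic' cc' [a1 [b1 [Ia1 [Ib1 invb1] a1c b1c aE]]].
by exists a1, b1; split => //; apply: coprime_int_mono cc' _.
Qed.

Lemma colon_incl_num a1 b1 : is_int_ideal O a1 -> sub_incl b1 O ->
  sub_incl a1 (ideal_colon a1 b1).
Proof. by move=> [suba1 _] b1O x a1x y /b1O Oy; apply: (submodMr suba1 Oy a1x). Qed.

Lemma colon_incl_inverse a a' a1 b1 : is_submodule O a' -> sub_eq (ideal_mul a a') O ->
  sub_incl a1 O -> sub_eq a (ideal_colon a1 b1) -> sub_incl b1 a'.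
Proof.
move=> suba' aa' a1O aE y b1y; apply: (inverse_colon orderO suba' aa') => x /(aE x).1 ax.
by rewrite mulrC; apply/a1O/ax.
Qed.

Lemma coprime_frac_num a c : is_int_ideal O c -> coprime_frac O a c ->
  exists2 t, a t & c (1 - t).
Proof.
move=> Ic [a1 [b1 [Ia1 [[_ b1O] _] a1c _ aE]]].
have [t a1t ct] := (coprime_intP Ia1 Ic).1 a1c.
by exists t => //; apply/(aE t).2; exact: (colon_incl_num Ia1 b1O a1t).
Qed.

Lemma coprime_frac_den a a' c : is_submodule O a' -> sub_eq (ideal_mul a a') O ->
  is_int_ideal O c -> coprime_frac O a c ->
  exists s, [/\ a' s, O s, s != 0 & c (1 - s)].
Proof.
move=> suba' aa' Ic [a1 [b1 [[_ a1O] [Ib1 invb1] _ b1c aE]]].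
have b1a' := colon_incl_inverse suba' aa' a1O aE.
have b1O := Ib1.2; have subc := Ic.1.
have [s b1s cs] := (coprime_intP Ib1 Ic).1 b1c.
have [s_eq0 | s_neq0] := eqVneq s 0; last by exists s; split => //; [apply: b1a' | apply: b1O].
have [s' b1s' s'_neq0] := invertible_nonzero orderO invb1.
exists s'; split => //; [exact: b1a' | exact: b1O |].
have c1 : c 1 by move: cs; rewrite s_eq0 subr0.
rewrite -[1 - s']mulr1; apply: (submodMl subc _ c1).
by apply: (orderB orderO); [exact: (order1 orderO) | exact: b1O].
Qed.

Definition ideal_scale (a : K -> Prop) (l : K) : K -> Prop :=
  fun x => exists y, a y /\ x = l * y.

Lemma principal_incl c x : is_submodule O c -> c x -> sub_incl (principal O x) c.
Proof. by move=> subc cx _ [y [Oy ->]]; apply: (submodMr subc Oy cx). Qed.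

Lemma scale_submod a l : is_submodule O a -> is_submodule O (ideal_scale a l).
Proof.
move=> suba; split.
- by exists 0; rewrite mulr0; split => //; apply: (submod0 suba).
- move=> _ _ [x [ax ->]] [y [ay ->]]; exists (x + y).
  by rewrite mulrDr; split => //; apply: (submodD suba ax ay).
- move=> r _ Or [x [ax ->]]; exists (r * x).
  by rewrite mulrCA; split => //; apply: (submodMl suba Or ax).
Qed.

Lemma principal_submod l : is_submodule O (principal O l).
Proof. exact: scale_submod (order_submod orderO). Qed.

Lemma scale_frac a l : l != 0 -> is_frac_ideal O a -> is_frac_ideal O (ideal_scale a l).
Proof.
move=> l_neq0 [suba [la [la_neq0 ala]]]; split; first exact: scale_submod.
exists (la / l); split; first by rewrite mulf_neq0 ?invr_eq0.
by move=> _ [y [ay ->]]; rewrite mulrA divfK //; apply: ala.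
Qed.

Lemma scale_mul_inverse a a' l l' : l * l' = 1 -> is_submodule O a -> is_submodule O a' ->
  sub_eq (ideal_mul a a') O -> sub_eq (ideal_mul (ideal_scale a l) (ideal_scale a' l')) O.
Proof.
move=> ll' suba suba' aa' z; split.
  apply: (ideal_mul_incl (order_submod orderO)) => _ _ [x [ax ->]] [y [a'y ->]].
  by rewrite mulrACA ll' mul1r; apply/(aa' _).1/ideal_mul_in.
case/(aa' z).2 => n [x [y [xy ->]]].
exists n, (fun i => l * x i), (fun i => l' * y i); split.
  by move=> i; case: (xy i) => ax a'y; split; [exists (x i) | exists (y i)].
by apply: eq_bigr => i _; rewrite mulrACA ll' mul1r.
Qed.

Lemma principal_frac l : l != 0 -> is_frac_ideal O (principal O l).
Proof. by move=> l_neq0; apply: scale_frac (order_frac_ideal orderO). Qed.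

Lemma principal_invertible l : l != 0 -> invertible O (principal O l).
Proof.
move=> l_neq0; split; first exact: principal_frac.
exists (principal O l^-1); split; first by apply: principal_frac; rewrite invr_eq0.
have sub := order_submod orderO.
exact: (scale_mul_inverse (divff l_neq0) sub sub (ideal_mul_order orderO)).
Qed.

Lemma scale_mul_principal a l : l != 0 -> is_submodule O a ->
  sub_eq a (ideal_mul (ideal_scale a l^-1) (principal O l)).
Proof.
move=> l_neq0 suba z; split => [az | ].
  have -> : z = (l^-1 * z) * (l * 1) by rewrite mulr1 mulrAC mulVf ?mul1r.
  by apply: ideal_mul_in; [exists z | exists 1; split => //; exact: (order1 orderO)].
apply: (ideal_mul_incl suba) => _ _ [x [ax ->]] [y [Oy ->]].
by rewrite mulrACA mulVf // mul1r; apply: (submodMr suba Oy ax).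
Qed.

Lemma congr1_of_mul m s alpha : is_int_ideal O m -> O s -> s != 0 -> m (1 - s) ->
  m ((alpha - 1) * s) -> Defs.congr1 O m alpha.
Proof.
move=> Im Os s_neq0 ms mas; rewrite /Defs.congr1 -(mulfK s_neq0 (alpha - 1)).
apply: ideal_mul_in => //; exists 1, s; split; first exact: (order1 orderO).
split; last by rewrite mul1r.
have Is : is_int_ideal O (principal O s).
  by split; [exact: principal_submod | move=> _ [y [Oy ->]]; apply: (orderM orderO)].
split => //; apply/(coprime_intP Is Im); exists s => //.
by exists 1; rewrite mulr1; split => //; exact: (order1 orderO).
Qed.

(* [b] is the colon ideal [(O : b')], which exhibits it as coprime to [d]. *)
Lemma Jstar_of_inverse d b b' : is_int_ideal O d ->
  is_frac_ideal O b -> is_frac_ideal O b' -> sub_eq (ideal_mul b b') O ->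
  sub_incl b' O -> coprime_int O b' d -> Jstar O d b.
Proof.
move=> Id Fb Fb' bb' b'O b'd.
have Ib' : is_int_ideal O b' by split => //; case: Fb'.
split => //; split; first by split => //; exists b'.
exists O, b'; split.
- exact: order_int_ideal.
- by split => //; split => //; exists b; split => //; apply: ideal_mul_eqC.
- apply/(coprime_intP (order_int_ideal orderO) Id); exists 1; first exact: (order1 orderO).
  by rewrite subrr; exact: (submod0 Id.1).
- exact: b'd.
- move=> x; split; first by move=> bx y b'y; apply/(bb' _).1/ideal_mul_in.
  exact: (inverse_colon orderO Fb.1 (ideal_mul_eqC bb')).
Qed.

End Coprimality.

(** * Finiteness of [O / d] *)

Lemma clear_denominators n (q : 'I_n -> rat) :
  exists2 D : int, D != 0 & exists z : 'I_n -> int, forall i, D%:~R * q i = (z i)%:~R.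
Proof.
exists (\prod_i denq (q i)); first by rewrite prodf_seq_neq0; apply/allP => i _; rewrite denq_neq0.
exists (fun i => (\prod_(j | j != i) denq (q j)) * numq (q i)) => i.
by rewrite (bigD1 i) //= !intrM numqE; ring.
Qed.

Lemma coord_int_comb (K : fieldExtType rat) n (X : n.-tuple K) (z : 'I_n -> int) j :
  free X -> coord X j (\sum_(i < n) X`_i *~ z i) = (z j)%:~R.
Proof.
by move=> freeX; under eq_bigr do rewrite -scaler_int; rewrite coord_sum_free.
Qed.

Definition idem_mod (K : fieldExtType rat) (d : K -> Prop) (x : K) := d (x * x - x).
Definition nil_mod (K : fieldExtType rat) (d : K -> Prop) (x : K) := exists p, d (x ^+ p).

Section OrderLattice.
Variables (K : fieldExtType rat) (O : K -> Prop).
Hypothesis orderO : is_order O.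

Lemma order_basis : exists2 X : (\dim {:K}).-tuple K, basis_of fullv X &
  forall x, O x <-> exists z : 'I_(\dim {:K}) -> int, x = \sum_(i < \dim {:K}) X`_i *~ z i.
Proof.
case: orderO => _ _ _ [b [Ob b_free]].
pose X := [tuple of mktuple b].
have Xi (i : 'I_(\dim {:K})) : X`_i = b i by rewrite -tnth_nth tnth_mktuple.
have freeX : free X.
  apply/freeP => q sum_q0 i; have [D D_neq0 [z Dq]] := clear_denominators q.
  have : \sum_i b i *~ z i = (D%:~R : rat) *: \sum_i q i *: X`_i.
    by rewrite scaler_sumr; apply: eq_bigr => j _; rewrite -scaler_int -Dq Xi scalerA.
  rewrite sum_q0 scaler0 => /b_free /(_ i) zi0; move/eqP: (Dq i).
  by rewrite zi0 mulf_eq0 intr_eq0 (negbTE D_neq0) => /eqP.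
exists X; first by rewrite basisEfree freeX subvf size_tuple leqnn.
by move=> x; rewrite Ob; split=> -[z ->]; exists z; apply: eq_bigr => i _; rewrite Xi.
Qed.

Lemma order_int_multiple x : exists2 N : int, N != 0 & O (N%:~R * x).
Proof.
have [X basX OX] := order_basis.
have [D D_neq0 [z Dq]] := clear_denominators (fun i => coord X i x).
exists D => //; apply/OX; exists z.
rewrite {1}(coord_basis basX (memvf x)) mulr_sumr; apply: eq_bigr => i _.
by rewrite -[X`_i *~ _](@scaler_int rat) -Dq -scalerA scaler_int mulrzl.
Qed.

Lemma submod_pos_int a x : is_submodule O a -> a x -> x != 0 -> exists2 N : int, 0 < N & a N%:~R.
Proof.
move=> suba ax x_neq0; have [N N_neq0 ON] := order_int_multiple x^-1.
have aN : a N%:~R by rewrite -[N%:~R](divfK x_neq0); exact: (submodMl suba ON ax).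
exists (N * N); first by rewrite lt0r mulf_neq0 //= -expr2 sqr_ge0.
by rewrite intrM; apply: (submodMl suba (order_int orderO N) aN).
Qed.

(* Reduce the integral coordinates modulo a positive integer [N] of [d]. *)
Lemma order_quotient_finite d : is_submodule O d -> (exists x, d x /\ x != 0) ->
  exists (T : finType) (f : K -> T), forall x y, O x -> O y -> f x = f y -> d (x - y).
Proof.
move=> subd [x0 [dx0 x0_neq0]]; have [N N_gt0 dN] := submod_pos_int subd dx0 x0_neq0.
have [X basX OX] := order_basis; have freeX := basis_free basX.
pose res (q : rat) : 'I_(absz N).+1 := inord (absz (numq q %% N)%Z).
have res_mod (z z' : int) : res z%:~R = res z'%:~R -> (z %% N)%Z = (z' %% N)%Z.
  have N_neq0 : N != 0 by rewrite gt_eqF.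
  have modN (w : int) : (absz (w %% N)%Z <= absz N)%N.
    by rewrite -lez_nat !gez0_abs ?modz_ge0 ?ltW ?ltz_pmod.
  rewrite /res !numq_int => /(congr1 val); rewrite /= !inordK ?ltnS ?modN //.
  by move/(congr1 Posz); rewrite !gez0_abs ?modz_ge0.
eexists; exists (fun x => [ffun i : 'I_(\dim {:K}) => res (coord X i x)]).
move=> _ _ /OX [z ->] /OX [z' ->].
move/ffunP => Ezz'; rewrite -sumrB.
have -> : \sum_(i < \dim {:K}) (X`_i *~ z i - X`_i *~ z' i) =
          N%:~R * \sum_(i < \dim {:K}) X`_i *~ ((z i %/ N)%Z - (z' i %/ N)%Z).
  rewrite mulr_sumr; apply: eq_bigr => i _; rewrite -mulrzBr mulrzl -mulrzA; congr (_ *~ _).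
  move: (Ezz' i); rewrite !ffunE !coord_int_comb // => /res_mod Ezi.
  by rewrite {1}(divz_eq (z i) N) {1}(divz_eq (z' i) N) Ezi; ring.
by apply: (submodMr subd _ dN); apply/OX; eexists.
Qed.

Lemma exp_idem_mod d z : is_submodule O d -> (exists x, d x /\ x != 0) -> O z ->
  exists2 k, (0 < k)%N & idem_mod d (z ^+ k).
Proof.
move=> subd d_neq0 Oz; have [T [f f_mod]] := order_quotient_finite subd d_neq0.
have OzX k : O (z ^+ k) by apply: orderX.
have [i [j [ij zij]]] : exists i j, (i < j)%N /\ d (z ^+ j - z ^+ i).
  pose h (k : 'I_#|T|.+1) := f (z ^+ k).
  have /injectivePn [i [j ij hij]] : ~~ injectiveb h.
    by apply/negP => /injectiveP/leq_card; rewrite card_ord ltnn.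
  have [lt_ij | lt_ji | /val_inj eq_ij] := ltngtP i j; last by rewrite eq_ij eqxx in ij.
    by exists i, j; split => //; apply: f_mod (esym hij).
  by exists j, i; split => //; apply: f_mod.
(* [z ^+ i] repeats with period [p], so [z ^+ k] is idempotent for any multiple [k >= i] of [p]. *)
pose p := (j - i)%N; have p_gt0 : (0 < p)%N by rewrite subn_gt0.
have periodic l c : d (z ^+ (i + l + c * p) - z ^+ (i + l)).
  elim: c => [|c IHc]; first by rewrite mul0n addn0 subrr; apply: (submod0 subd).
  have -> : z ^+ (i + l + c.+1 * p) - z ^+ (i + l) =
            z ^+ (l + c * p) * (z ^+ j - z ^+ i) + (z ^+ (i + l + c * p) - z ^+ (i + l)).
    have Ej : (l + c * p + j = i + l + c.+1 * p)%N by rewrite /p mulSn; lia.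
    have Ei : (l + c * p + i = i + l + c * p)%N by lia.
    by rewrite mulrBr -!exprD Ej Ei addrA subrK.
  by apply: (submodD subd) => //; apply: (submodMl subd (OzX _) zij).
exists (p * i.+1)%N; first by rewrite muln_gt0 p_gt0.
have le_ik : (i <= p * i.+1)%N by rewrite (leq_trans (leqnSn i)) // leq_pmull.
rewrite /idem_mod -exprD; have := periodic (p * i.+1 - i)%N i.+1.
by rewrite subnKC // [(i.+1 * p)%N]mulnC.
Qed.

End OrderLattice.

(** * Idempotents modulo an ideal *)

Section IdempotentsModulo.
Variables (K : fieldExtType rat) (O d : K -> Prop).
Hypotheses (orderO : is_order O) (subd : is_submodule O d).

Lemma idem_modM x y : O x -> O y -> idem_mod d x -> idem_mod d y -> idem_mod d (x * y).
Proof.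
move=> Ox Oy dx dy; rewrite /idem_mod.
have -> : x * y * (x * y) - x * y = (x * x - x) * (y * y) + x * (y * y - y) by ring.
apply: (submodD subd); first exact: (submodMr subd (orderM orderO Oy Oy) dx).
exact: (submodMl subd Ox dy).
Qed.

Lemma idem_mod1B x : idem_mod d x -> idem_mod d (1 - x).
Proof. by rewrite /idem_mod; have -> : (1 - x) * (1 - x) - (1 - x) = x * x - x by ring. Qed.

Lemma idem_mod_prod I r (P : pred I) (F : I -> K) : (forall i, O (F i)) ->
  (forall i, idem_mod d (F i)) -> idem_mod d (\prod_(i <- r | P i) F i).
Proof.
move=> OF dF; apply: (proj2 (big_ind (fun x => O x /\ idem_mod d x) _ _ _))
  => [|x y [Ox dx] [Oy dy]|i _].
- by split; [exact: (order1 orderO) | rewrite /idem_mod mulr1 subrr; exact: (submod0 subd)].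
- by split; [exact: (orderM orderO) | exact: idem_modM].
- by split.
Qed.

Lemma idem_modX x k : O x -> idem_mod d x -> (0 < k)%N -> d (x ^+ k - x).
Proof.
move=> Ox dx; elim: k => [//|[|k] IHk] _; first by rewrite expr1 subrr; exact: (submod0 subd).
have -> : x ^+ k.+2 - x = x * (x ^+ k.+1 - x) + (x * x - x) by rewrite exprS; ring.
by apply: (submodD subd) => //; apply: (submodMl subd Ox); exact: IHk.
Qed.

Lemma nil_modMl x y : O y -> nil_mod d x -> nil_mod d (y * x).
Proof.
by move=> Oy [p dx]; exists p; rewrite exprMn; apply: (submodMl subd (orderX orderO p Oy) dx).
Qed.

Lemma nil_modD x y : O x -> O y -> nil_mod d x -> nil_mod d y -> nil_mod d (x + y).
Proof.
move=> Ox Oy [p dx] [q dy]; exists (p + q)%N; rewrite exprDn.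
apply: (submod_sum subd) => -[i /= lt_i] _; rewrite -mulr_natr.
apply: (submodMr subd (order_nat orderO _)); have [le_qi | lt_iq] := leqP q i.
  rewrite -(subnK le_qi) exprD mulrA.
  exact: (submodMl subd (orderM orderO (orderX orderO _ Ox) (orderX orderO _ Oy)) dy).
have -> : (p + q - i = p + (q - i))%N by lia.
rewrite exprD -mulrA.
exact: (submodMr subd (orderM orderO (orderX orderO _ Ox) (orderX orderO _ Oy)) dx).
Qed.

Lemma nil_mod_sum I r (P : pred I) (F : I -> K) : (forall i, P i -> O (F i)) ->
  (forall i, P i -> nil_mod d (F i)) -> nil_mod d (\sum_(i <- r | P i) F i).
Proof.
move=> OF dF; apply: (proj2 (big_ind (fun x => O x /\ nil_mod d x) _ _ _))
  => [|x y [Ox dx] [Oy dy]|i Pi].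
- by split; [exact: (order0 orderO) | exists 1%N; rewrite expr1; exact: (submod0 subd)].
- by split; [exact: (orderD orderO) | exact: nil_modD].
- by split; [exact: OF | exact: dF].
Qed.

Lemma idem_nil_mod x : O x -> idem_mod d x -> nil_mod d x -> d x.
Proof.
move=> Ox dx [[|p] dxp]; first by rewrite -[x]mulr1; exact: (submodMl subd Ox dxp).
rewrite -[x](subKr (x ^+ p.+1)); apply: (submodB orderO subd) => //.
exact: idem_modX.
Qed.

Lemma orth_idem_sum_mul r (e A B : nat -> K) :
  (forall p q, d (e p * e q - (p == q)%:R * e p)) -> (forall p q, O (A p * B q)) ->
  d ((\sum_(p < r) e p * A p) * (\sum_(q < r) e q * B q) - \sum_(p < r) e p * (A p * B p)).
Proof.
move=> orth OAB; rewrite mulr_suml -sumrB; apply: (submod_sum subd) => p _.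
rewrite mulr_sumr (bigD1 p) //= addrAC; apply: (submodD subd).
  have -> : e p * A p * (e p * B p) - e p * (A p * B p) =
            (e p * e p - (p == p :> nat)%:R * e p) * (A p * B p) by rewrite eqxx mul1r; ring.
  exact: (submodMr subd (OAB p p) (orth p p)).
apply: (submod_sum subd) => q qp; have pq : (p : nat) != q by rewrite eq_sym.
have -> : e p * A p * (e q * B q) = (e p * e q - (p == q :> nat)%:R * e p) * (A p * B q).
  by rewrite (negbTE pq) mul0r subr0; ring.
exact: (submodMr subd (OAB p q) (orth p q)).
Qed.

End IdempotentsModulo.

Section IdempotentPartition.
Variables (K : fieldExtType rat) (O d : K -> Prop).
Hypotheses (orderO : is_order O) (subd : is_submodule O d).
Variables (u c : nat -> K) (k : nat -> nat) (r : nat).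
Hypotheses (order_u : forall j, O (u j)) (order_c : forall j, O (c j)).
Hypotheses (k_gt0 : forall j, (0 < k j)%N) (idem_uk : forall j, idem_mod d (u j ^+ k j)).
Hypothesis sum_cu : \sum_(j < r) c j * u j = 1.

(* [g j] is an idempotent power of [u j]; [e j] is the part of [g j] not
   already covered by [g 0], ..., [g (j - 1)]. *)
Let g j := u j ^+ k j.
Let P i := \prod_(j < i) (1 - g j).
Let e j := g j * P j.

Let order_g j : O (g j). Proof. exact: orderX. Qed.
Let order_1g j : O (1 - g j). Proof. exact: (orderB orderO (order1 orderO)). Qed.
Let order_P i : O (P i). Proof. by apply: (order_prod orderO) => j _. Qed.
Let order_e j : O (e j). Proof. exact: (orderM orderO). Qed.

Let idem_P i : idem_mod d (P i).
Proof.
by apply: (idem_mod_prod orderO subd) => j; [exact: order_1g | exact: (idem_mod1B (idem_uk j))].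
Qed.

Let g_orth_1g j : d (g j * (1 - g j)).
Proof.
have -> : g j * (1 - g j) = - (g j * g j - g j) by ring.
exact: (submodN orderO subd (idem_uk j)).
Qed.

Let P_factor j i : (j < i)%N -> exists2 R, O R & P i = (1 - g j) * R.
Proof.
move=> lt_ji; exists (\prod_(l < i | l != Ordinal lt_ji) (1 - g l)).
  by apply: (order_prod orderO) => l _.
by rewrite /P (bigD1 (Ordinal lt_ji)).
Qed.

Let orth_e p q : d (e p * e q - (p == q)%:R * e p).
Proof.
have [<-|pq] := eqVneq p q.
  by rewrite mul1r; exact: (idem_modM orderO subd (order_g p) (order_P p) (idem_uk p) (idem_P p)).
rewrite mul0r subr0.
wlog lt_pq : p q pq / (p < q)%N.
  move=> orth; have [/orth|/orth|eq_pq] := ltngtP p q; last by rewrite eq_pq eqxx in pq.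
    by apply.
  by rewrite mulrC; apply; rewrite eq_sym.
have [R OR PqE] := P_factor lt_pq.
have -> : e p * e q = (g p * (1 - g p)) * (P p * g q * R) by rewrite /e PqE; ring.
apply: (submodMr subd _ (g_orth_1g p)).
exact: (orderM orderO (orderM orderO (order_P p) (order_g q)) OR).
Qed.

Let sum_e i : \sum_(j < i) e j = 1 - P i.
Proof.
elim: i => [|i IHi]; first by rewrite big_ord0 /P big_ord0 subrr.
by rewrite big_ord_recr /= IHi /e /P big_ord_recr /=; ring.
Qed.

(* [P r] is idempotent, and nilpotent because it kills every [u j] up to nilpotents. *)
Let P_r_mod : d (P r).
Proof.
apply: (idem_nil_mod orderO subd (order_P r) (idem_P r)).
have nil_Pu j : (j < r)%N -> nil_mod d (P r * u j).
  move=> lt_jr; exists (k j); rewrite exprMn.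
  have -> : P r ^+ k j * u j ^+ k j = (P r ^+ k j - P r) * g j + P r * g j by rewrite mulrBl subrK.
  apply: (submodD subd).
    exact: (submodMr subd (order_g j) (idem_modX subd (order_P r) (idem_P r) (k_gt0 j))).
  have [R OR ->] := P_factor lt_jr.
  have -> : (1 - g j) * R * g j = (g j * (1 - g j)) * R by ring.
  exact: (submodMr subd OR (g_orth_1g j)).
rewrite -[P r]mulr1 -sum_cu mulr_sumr.
apply: (nil_mod_sum orderO subd) => j _; rewrite mulrCA.
  by apply: (orderM orderO (order_c j)); apply: (orderM orderO).
exact: (nil_modMl orderO subd (order_c j) (nil_Pu j (ltn_ord j))).
Qed.

Let principal_1B : principal O (1 - u 0) (1 - g 0).
Proof.
exists (\sum_(i < k 0) 1 ^+ ((k 0).-1 - i) * u 0 ^+ i); split; last by rewrite -subrXX expr1n.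
by apply: (order_sum orderO) => i _; rewrite expr1n mul1r; apply: orderX.
Qed.

Lemma idem_partition : exists e : nat -> K,
  [/\ forall j, O (e j), forall p q, d (e p * e q - (p == q)%:R * e p),
      d (1 - \sum_(j < r) e j), forall j, d (e j * u j ^+ k j - e j) &
      principal O (1 - u 0) (1 - e 0) /\
      forall j, (0 < j)%N -> principal O (1 - u 0) (e j)].
Proof.
exists e; split; [exact: order_e | exact: orth_e | | |].
- by rewrite sum_e opprB addrC subrK; exact: P_r_mod.
- move=> j; have -> : e j * u j ^+ k j - e j = (g j * g j - g j) * P j by rewrite /e /g; ring.
  exact: (submodMr subd (order_P j) (idem_uk j)).
split; first by rewrite /e /P big_ord0 mulr1.
move=> j j_gt0; have [R OR PjE] := P_factor j_gt0; rewrite /e PjE.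
have -> : g j * ((1 - g 0) * R) = (1 - g 0) * (g j * R) by ring.
exact: (submodMr (principal_submod orderO (1 - u 0)) (orderM orderO (order_g j) OR) principal_1B).
Qed.

End IdempotentPartition.

(** * Approximating a unit modulo [d] *)

Section UnitApproximation.
Variables (K : fieldExtType rat) (O : K -> Prop).
Hypothesis orderO : is_order O.

Lemma unit_mod_approx d m a a' t1 s1 (x y : nat -> K) n :
  is_submodule O d -> (exists z, d z /\ z != 0) -> is_submodule O m ->
  is_submodule O a -> is_submodule O a' -> (forall v w, a v -> a' w -> O (v * w)) ->
  a t1 -> a' s1 -> m (1 - t1 * s1) ->
  (forall i, a (x i) /\ a' (y i)) -> \sum_(i < n) x i * y i = 1 ->
  exists2 t, a t & exists2 s, a' s & d (1 - t * s) /\ forall z, a' z -> m ((t - t1) * z).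
Proof.
move=> subd d_neq0 subm suba suba' mul_aa' a_t1 a'_s1 m_ts1 axy sum_xy.
pose T j := if j is i.+1 then x i else t1.
pose S j := if j is i.+1 then y i else s1.
have aT j : a (T j) by case: j => [|i] //=; case: (axy i).
have a'S j : a' (S j) by case: j => [|i] //=; case: (axy i).
pose u j := T j * S j.
have Ou j : O (u j) := mul_aa' _ _ (aT j) (a'S j).
have [k kP] : exists k : nat -> nat, forall j, (0 < k j)%N /\ idem_mod d (u j ^+ k j).
  apply: (functional_choice (fun j kj => (0 < kj)%N /\ idem_mod d (u j ^+ kj))) => j.
  by have [kj kj_gt0 idem_kj] := exp_idem_mod orderO subd d_neq0 (Ou j); exists kj.
pose c (j : nat) : K := (j != 0%N)%:R.
have Oc j : O (c j).
  by rewrite /c; case: (j != 0%N); [exact: (order1 orderO) | exact: (order0 orderO)].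
have sum_cu : \sum_(j < n.+1) c j * u j = 1.
  by rewrite big_ord_recl mul0r add0r -sum_xy; apply: eq_bigr => i _; rewrite lift0 mul1r.
have [e [Oe orth_e sum_e unit_e [e0 e_pos]]] :=
  idem_partition orderO subd Ou Oc (fun j => (kP j).1) (fun j => (kP j).2) sum_cu.
pose w j := u j ^+ (k j).-1.
have Ow j : O (w j) by apply: orderX.
have uw j : T j * (S j * w j) = u j ^+ k j by rewrite mulrA -exprS prednK //; case: (kP j).
exists (\sum_(j < n.+1) e j * T j).
  by apply: (submod_sum suba) => j _; apply: (submodMl suba (Oe j) (aT j)).
exists (\sum_(j < n.+1) e j * (S j * w j)).
  apply: (submod_sum suba') => j _; apply: (submodMl suba' (Oe j)).
  exact: (submodMr suba' (Ow j) (a'S j)).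
split.
  set t := \sum_(j < n.+1) _; set s := \sum_(j < n.+1) _.
  set E := \sum_(j < n.+1) e j; set G := \sum_(j < n.+1) e j * u j ^+ k j.
  have d_tsG : d (t * s - G).
    rewrite /G; under eq_bigr do rewrite -uw.
    rewrite /t /s; apply: (orth_idem_sum_mul (A := T) (B := fun q => S q * w q) subd _ orth_e).
    move=> p q.
    by rewrite mulrA; apply: (orderM orderO (mul_aa' _ _ (aT p) (a'S q)) (Ow q)).
  have d_GE : d (G - E) by rewrite -sumrB; apply: (submod_sum subd) => j _; apply: unit_e.
  have -> : 1 - t * s = (1 - E) - (G - E) - (t * s - G) by ring.
  exact: (submodB orderO subd (submodB orderO subd sum_e d_GE) d_tsG).
move=> z a'z; have m_1u0 := principal_incl subm m_ts1.
have OTz j : O (T j * z) by apply: mul_aa'.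
rewrite big_ord_recl /=; set rest := \sum_(i < n) _.
have -> : (e 0%N * t1 + rest - t1) * z = - ((1 - e 0%N) * (t1 * z)) + rest * z by ring.
apply: (submodD subm).
  exact: (submodN orderO subm (submodMr subm (OTz 0%N) (m_1u0 _ e0))).
rewrite mulr_suml; apply: (submod_sum subm) => i _; rewrite -mulrA.
exact: (submodMr subm (OTz i.+1) (m_1u0 _ (e_pos _ (ltn0Sn i)))).
Qed.

End UnitApproximation.

(** * Totally positive generators *)

Section RealEmbeddings.
Variables (K : fieldExtType rat) (R : realType).

(* Every real embedding sends [t] to a root of the rational minimal polynomial of [t]. *)
Lemma rmorph_bound (t : K) : exists B : R, forall rho : {rmorphism K -> R}, `|rho t| < B.
Proof.
have /polyOver1P [q q_min] := minPolyOver 1%AS t.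
have q_neq0 : q != 0.
  apply: contraTneq (monic_minPoly 1%AS t) => q0.
  by rewrite q_min q0 map_poly0 monicE lead_coef0 eq_sym oner_eq0.
pose p := map_poly (ratr : rat -> R) q.
exists (polyrcf.cauchy_bound p) => rho.
apply: polyrcf.cauchy_boundP; first by rewrite map_poly_eq0.
have <- : map_poly rho (minPoly 1%AS t) = p.
  rewrite q_min -map_poly_comp; apply: eq_map_poly => a /=.
  by rewrite -[a%:A]/(in_alg K a) (fmorph_eq_rat (in_alg K)) fmorph_rat.
by rewrite horner_map minPolyxx rmorph0.
Qed.

Lemma totally_positive_shift (t : K) (c : int) : 0 < c ->
  exists k : nat, t + k%:R * c%:~R != 0 /\
    forall rho : {rmorphism K -> R}, 0 < rho (t + k%:R * c%:~R).
Proof.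
move=> c_gt0; have [B Bt] := rmorph_bound t.
have pos (k : nat) : B < k%:R -> forall rho : {rmorphism K -> R}, 0 < rho (t + k%:R * c%:~R).
  move=> Bk rho; have := Bt rho; rewrite ltr_norml => /andP [Bt_low _].
  rewrite rmorphD rmorphM rmorph_nat rmorph_int.
  have k_le_kc : k%:R <= k%:R * (c%:~R : R) by rewrite ler_peMr // ler1z.
  lra.
pose k0 := Num.bound `|B|.
have Bk0 : B < k0%:R by apply: le_lt_trans (ler_norm B) (archi_boundP _).
(* The shifts [t + k c] are distinct, so one of two consecutive ones is nonzero. *)
have [tk0 | tk0] := eqVneq (t + k0%:R * c%:~R) 0; last by exists k0; split => //; apply: pos.
exists k0.+1; split; last by apply: pos; rewrite (lt_le_trans Bk0) // ler_nat.
rewrite mulrSr mulrDl mul1r addrA tk0 add0r.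
by rewrite -(rmorph_int (in_alg K)) fmorph_eq0 intr_eq0 gt_eqF.
Qed.

End RealEmbeddings.

Section RayDecomposition.
Variables (K : fieldExtType rat) (O : K -> Prop).
Hypothesis orderO : is_order O.

(* [alpha] is [t] plus a large multiple of a positive integer of [d a]. *)
Lemma totally_positive_perturb (R : realType) d a a' t : is_submodule O d -> is_submodule O a ->
  (exists x, d x /\ x != 0) -> (exists2 x, a x & x != 0) ->
  (forall x y, a x -> a' y -> O (x * y)) -> a t ->
  exists alpha, [/\ a alpha, alpha != 0, forall rho : {rmorphism K -> R}, 0 < rho alpha &
    forall z, a' z -> d ((alpha - t) * z)].
Proof.
move=> subd suba [xd [dxd xd_neq0]] [xa axa xa_neq0] mul_aa' a_t.
have [N N_gt0 dN] := submod_pos_int orderO subd dxd xd_neq0.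
have [M M_gt0 aM] := submod_pos_int orderO suba axa xa_neq0.
have [k [alpha_neq0 alpha_pos]] := totally_positive_shift R t (mulr_gt0 N_gt0 M_gt0).
exists (t + k%:R * (N * M)%:~R); split => // [|z a'z].
  apply: (submodD suba a_t); rewrite intrM mulrA.
  exact: (submodMl suba (orderM orderO (order_nat orderO k) (order_int orderO N)) aM).
rewrite addrAC subrr add0r intrM.
have -> : k%:R * (N%:~R * M%:~R) * z = k%:R * ((M%:~R * z) * N%:~R) :> K by ring.
by apply: (submodMl subd (order_nat orderO k)); apply: (submodMl subd (mul_aa' _ _ aM a'z) dN).
Qed.

Lemma Jstar_ray_decomp (R : realType) (Sigma : {rmorphism K -> R} -> Prop) m d a :
  is_int_ideal O m -> is_int_ideal O d -> (exists x, d x /\ x != 0) -> sub_incl d m ->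
  Jstar O m a -> exists b c, [/\ Jstar O d b, Pray O m Sigma c & sub_eq a (ideal_mul b c)].
Proof.
move=> Im Id d_neq0 dm [Fa [Ia Ca]]; have [_ [a' [Fa' aa']]] := Ia.
have suba := Fa.1; have suba' := Fa'.1; have subm := Im.1; have subd := Id.1.
have mul_aa' x y : a x -> a' y -> O (x * y) by move=> ax a'y; apply/(aa' _).1/ideal_mul_in.
have [t1 a_t1 m_t1] := coprime_frac_num orderO Im Ca.
have [s1 [a'_s1 O_s1 s1_neq0 m_s1]] := coprime_frac_den orderO suba' aa' Im Ca.
have m_ts1 : m (1 - t1 * s1).
  have -> : 1 - t1 * s1 = (1 - t1) * s1 + (1 - s1) by ring.
  exact: (submodD subm (submodMr subm O_s1 m_t1) m_s1).
have [n [x [y [xy sum_xy]]]] := ideal_mul_seq suba suba' ((aa' 1).2 (order1 orderO)).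
have [t a_t [s a'_s [d_ts m_t]]] :=
  unit_mod_approx orderO subd d_neq0 subm suba suba' mul_aa' a_t1 a'_s1 m_ts1 xy (esym sum_xy).
have [alpha [a_alpha alpha_neq0 alpha_pos d_alpha]] :=
  totally_positive_perturb R subd suba d_neq0 (invertible_nonzero orderO Ia) mul_aa' a_t.
exists (ideal_scale a alpha^-1), (principal O alpha); split.
- apply: (Jstar_of_inverse orderO (b' := ideal_scale a' alpha) Id).
  + by apply: scale_frac Fa; rewrite invr_eq0.
  + exact: scale_frac alpha_neq0 Fa'.
  + exact: (scale_mul_inverse orderO (mulVf alpha_neq0) suba suba' aa').
  + by move=> _ [v [a'v ->]]; apply: mul_aa'.
  apply/(coprime_intP orderO _ Id); last first.
    exists (alpha * s); first by exists s.
    have -> : 1 - alpha * s = (1 - t * s) - (alpha - t) * s by ring.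
    exact: (submodB orderO subd d_ts (d_alpha s a'_s)).
  split; last by move=> _ [v [a'v ->]]; apply: mul_aa'.
  exact: scale_submod suba'.
- exists alpha; split => //; apply: (congr1_of_mul orderO Im O_s1 s1_neq0 m_s1).
  have -> : (alpha - 1) * s1 = (alpha - t) * s1 + (t - t1) * s1 - (1 - t1) * s1 by ring.
  apply: (submodB orderO subm); last exact: (submodMr subm O_s1 m_t1).
  by apply: (submodD subm); [apply/dm/d_alpha | apply: m_t].
- exact: scale_mul_principal.
Qed.

End RayDecomposition.

Unset Implicit Arguments.
Theorem lemma5p12 (K : fieldExtType rat) (O m d : K -> Prop)
  (R : realType) (Sigma : {rmorphism K -> R} -> Prop) :
  is_order O ->
  is_int_ideal O m -> (exists x, m x /\ x != 0) ->
  is_int_ideal O d -> (exists x, d x /\ x != 0) ->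
  sub_incl d m ->
  [/\ (* the inclusion J*_d ⊆ J*_m *)
      (forall a, Jstar O d a -> Jstar O m a),
      (* P^d_{m,Σ} is contained in J*_d *)
      (forall a, Pray_d O m d Sigma a -> Jstar O d a),
      (* the kernel of J*_d -> Cl_{m,Σ} is P^d_{m,Σ} *)
      (forall a, Jstar O d a -> (Pray O m Sigma a <-> Pray_d O m d Sigma a)) &
      (* surjectivity: every class of J*_m contains an element of J*_d *)
      (forall a, Jstar O m a ->
         exists b c, [/\ Jstar O d b, Pray O m Sigma c & sub_eq a (ideal_mul b c)])].
Proof.
move=> orderO Im _ Id d_neq0 dm; split.
- by move=> a [Fa [Ia Ca]]; split => //; split => //; exact: (coprime_frac_mono orderO Id Im dm Ca).
- move=> a [[alpha [alpha_neq0 _ _ a_eq]] Ca]; split.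
    exact: frac_ideal_eq a_eq (principal_frac orderO alpha_neq0).
  by split => //; apply: invertible_eq a_eq (principal_invertible orderO alpha_neq0).
- by move=> a [_ [_ Ca]]; split => [Pa | []].
- by move=> a; apply: Jstar_ray_decomp.
Qed.
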